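(* Let $(X,\mathtt{d})$ be a finite metric space with $X=\bigsqcup_{i=1}^sX_i$, and consider $k$-center clustering with $z$ outliers on $X$ with optimal radius $r_{\mathtt{opt}}$ and an optimal outlier set $O=\bigsqcup_{i=1}^sO_i$ with $O_i\subseteq X_i$ and $z_i^*=|O_i|$. Then $2r_{\mathtt{opt}}\geq\max_{1\leq i\leq s}r_{\mathtt{opt}}(X_i,k,z_i^* )$.
   Context: For a finite metric set $Y$ of size $N$ and integer $0\leq w<N$, $r_{\mathtt{opt}}(Y,k,w)$ denotes the optimal value of $k$-center clustering with $w$ outliers on $Y$: the minimum over $Y'\subseteq Y$ with $|Y'|\geq N-w$ and centers $c_1,\dots,c_k\in Y$ of $\max_{p\in Y'}\min_j\mathtt{d}(p,c_j)$. $r_{\mathtt{opt}}=r_{\mathtt{opt}}(X,k,z)$, and $O$ is the set of $z$ points excluded by a fixed optimal solution on $X$. *)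

From HB Require Import structures.
From mathcomp Require Import all_boot all_order all_algebra.
From mathcomp Require Import reals constructive_ereal.
Set Implicit Arguments. Unset Strict Implicit. Unset Printing Implicit Defensive.
Import Order.TTheory GRing.Theory Num.Theory.
Local Open Scope ring_scope.
Local Open Scope ereal_scope.

Definition is_metric (R : realType) (T : finType) (d : T -> T -> R) : Prop :=
  [/\ forall x y, d x y = 0%R <-> x = y,
      forall x y, d x y = d y x &
      forall x y w, (d x w <= d x y + d y w)%R].

Definition dist_centers (R : realType) (T : finType) (d : T -> T -> R) (k : nat)
  (c : {ffun 'I_k -> T}) (p : T) : \bar R :=
  \big[mine/+oo]_(j < k) (d p (c j))%:E.

Definition kcost (R : realType) (T : finType) (d : T -> T -> R) (k : nat)
  (Y' : {set T}) (c : {ffun 'I_k -> T}) : \bar R :=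
  \big[maxe/-oo]_(p in Y') dist_centers d c p.

Definition r_opt (R : realType) (T : finType) (d : T -> T -> R)
  (Y : {set T}) (k w : nat) : \bar R :=
  \big[mine/+oo]_(Y' : {set T} | (Y' \subset Y) && (#|Y| - w <= #|Y'|)%N)
    \big[mine/+oo]_(c : {ffun 'I_k -> T} | [forall j, c j \in Y]) kcost d Y' c.

From HB Require Import structures.
From mathcomp Require Import all_boot all_order all_algebra.
From mathcomp Require Import reals constructive_ereal.
Set Implicit Arguments.
Unset Strict Implicit.
Unset Printing Implicit Defensive.

Import Order.TTheory GRing.Theory Num.Theory.
Local Open Scope ring_scope.
Local Open Scope ereal_scope.

(* Restrict an optimal solution (centers c, inliers ~: O) to X_i: replace each
   center c_j by a point c'_j of X_i nearest to it and keep the inliers of X_i.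
   For p in X_i, d(c'_j, c_j) <= d(p, c_j), so the triangle inequality gives
   d(p, c'_j) <= 2 d(p, c_j): this feasible solution for X_i costs <= 2 r_opt. *)

Section KCenter.
Variables (R : realType) (T : finType) (d : T -> T -> R).

Lemma r_opt_le_kcost (Y Y' : {set T}) (k w : nat) (c : {ffun 'I_k -> T}) :
  Y' \subset Y -> (#|Y| - w <= #|Y'|)%N -> (forall j, c j \in Y) ->
  r_opt d Y k w <= kcost d Y' c.
Proof.
move=> sY'Y cardY' cY; rewrite /r_opt.
apply: (@bigmin_inf _ _ _ _ Y'); first by rewrite sY'Y cardY'.
apply: (@bigmin_inf _ _ _ _ c) => //.
exact/forallP.
Qed.

Lemma dist_centers_le (k : nat) (c : {ffun 'I_k -> T}) (p : T) (j : 'I_k) :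
  dist_centers d c p <= (d p (c j))%:E.
Proof. exact: (bigmin_le _ j (fun j => (d p (c j))%:E)). Qed.

Lemma dist_centers_attained (k : nat) (c : {ffun 'I_k.+1 -> T}) (p : T) :
  exists j, dist_centers d c p = (d p (c j))%:E.
Proof.
rewrite /dist_centers.
have [j _ ->] := @eq_bigmin _ _ _ +oo%E ord0 xpredT
  (fun j => (d p (c j))%:E) isT (fun _ _ => leey _).
by exists j.
Qed.

Lemma dist_centers_le_kcost (k : nat) (Y' : {set T}) (c : {ffun 'I_k -> T}) p :
  p \in Y' -> dist_centers d c p <= kcost d Y' c.
Proof. by move=> pY'; apply: le_bigmax_cond. Qed.

Definition nearest_centers (k : nat) (A : {set T}) (x0 : T)
    (c : {ffun 'I_k -> T}) : {ffun 'I_k -> T} :=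
  [ffun j => [arg min_(q < x0 in A) d q (c j)]%O].

Lemma nearest_centersP (k : nat) (A : {set T}) (x0 : T)
    (c : {ffun 'I_k -> T}) j :
  x0 \in A ->
  nearest_centers A x0 c j \in A /\
  forall q, q \in A -> (d (nearest_centers A x0 c j) (c j) <= d q (c j))%R.
Proof.
move=> x0A; rewrite ffunE.
by case: arg_minP => // q qA qmin; split => // q' /qmin.
Qed.

Hypothesis d_sym : forall x y, d x y = d y x.
Hypothesis d_triangle : forall x y w, (d x w <= d x y + d y w)%R.

Lemma dist_nearest_centers_le (k : nat) (A : {set T}) (x0 : T)
    (c : {ffun 'I_k -> T}) p :
  x0 \in A -> p \in A ->
  dist_centers d (nearest_centers A x0 c) p <= 2%:E * dist_centers d c p.
Proof.
move=> x0A pA; case: k c => [|k'] c.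
  by rewrite /dist_centers !big_ord0 mulry gtr0_sg // mul1e.
have [j ->] := dist_centers_attained c p.
apply: le_trans (dist_centers_le _ _ j) _.
have [_ nearest_min] := nearest_centersP c j x0A.
rewrite -EFinM lee_fin mulr_natl mulr2n.
apply: le_trans (d_triangle p (c j) _) _.
by rewrite lerD2l d_sym nearest_min.
Qed.

Lemma kcost_nearest_centers_le (k : nat) (A O : {set T}) (x0 : T)
    (c : {ffun 'I_k -> T}) :
  x0 \in A ->
  kcost d (A :\: O) (nearest_centers A x0 c) <= 2%:E * kcost d (~: O) c.
Proof.
move=> x0A; apply: bigmax_le => [|p]; first exact: leNye.
rewrite inE => /andP[pO pA].
apply: le_trans (dist_nearest_centers_le c x0A pA) _.
apply: lee_wpmul2l; first by rewrite lee_fin.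
by apply: dist_centers_le_kcost; rewrite inE.
Qed.

End KCenter.

Theorem lemma18 (R : realType) (T : finType) (d : T -> T -> R)
  (s : nat) (Xs : 'I_s -> {set T}) (k z : nat) (O : {set T})
  (c : {ffun 'I_k -> T}) :
  is_metric d ->
  (forall i, Xs i != set0) ->
  (forall i j, i != j -> [disjoint Xs i & Xs j]) ->
  (forall x : T, exists i, x \in Xs i) ->
  (0 < k)%N -> (z < #|T|)%N ->
  #|O| = z ->
  kcost d (~: O) c = r_opt d [set: T] k z ->
  forall i : 'I_s,
    r_opt d (Xs i) k #|O :&: Xs i| <= 2%:E * r_opt d [set: T] k z.
Proof.
move=> [_ d_sym d_triangle] Xs_neq0 _ _ _ _ _ c_opt i.
have /set0Pn [x0 x0X] := Xs_neq0 i.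
rewrite -c_opt.
apply: le_trans (kcost_nearest_centers_le d_sym d_triangle O c x0X).
apply: r_opt_le_kcost; first exact: subsetDl.
- by rewrite cardsD setIC.
- by move=> j; have [] := nearest_centersP d c j x0X.
Qed.
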